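(* Over chain graphs, MWL is subsumed by $\mathrm{FO}[<,+,\{P_a\}_{a\in\Sigma}]$: for every MWL sentence $\phi$ there is an $\mathrm{FO}[<,+,\{P_a\}_{a\in\Sigma}]$ sentence $\psi$ such that for every chain data graph $G$ whose only data are node ids (i.e. $\mathrm{dataof}$ is constant), $G\models\phi$ iff $w_G\models\psi$, where $w_G\in\Sigma^*$ is the label of the path from the first to the last node of $G$. Consequently, the query ''the number of $a$-labelled edges is even'' is not expressible in MWL.
   Context: Data graphs. Fix a finite alphabet $\Sigma$ and infinite data domains $\mathcal D_{\mathrm{id}}$ and $\mathcal D_{\mathrm{prop}}$. A data graph is $G=(V,E,\mathrm{id},\mathrm{dataof})$ with $V$ a finite nonempty set of nodes, $E\subseteq V\times\Sigma\times V$, $\mathrm{id}:V\to\mathcal D_{\mathrm{id}}$ injective and $\mathrm{dataof}:V\to\mathcal D_{\mathrm{prop}}$. A path is a sequence $\rho=v_0a_1v_1\cdots a_nv_n$ ($n\ge 0$) with $(v_{i-1},a_i,v_i)\in E$ for all $i$; its length is $n$, its positions are $0,\dots,n$, its label is $a_1\cdots a_n$. A chain data graph is a connected data graph in which every node has at most one predecessor and at most one successor. WL (walk logic). Path variables $\pi,\omega,\dots$ range over paths; each position variable $\ell^\pi$ has a sort $\pi$ and ranges over positions of the path assigned to $\pi$. Atoms: $E_a(\ell^\pi,m^\pi)$ ($m=\ell+1$ and the $m$-th label of the path is $a$); $\ell^\pi<m^\pi$ (same sort only); $\ell^\pi\equiv_{\mathrm{id}} n^\omega$ (the nodes at these positions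 are equal); $\ell^\pi\equiv_{\mathrm{data}} n^\omega$ (these nodes have equal $\mathrm{dataof}$). Closed under $\neg,\vee,\exists\ell^\pi,\exists\pi$. MWL (multi-path walk logic) is WL extended with atoms $\ell^\pi<n^\omega$ for arbitrary (possibly different) sorts $\pi,\omega$, true iff the position assigned to $\ell^\pi$ is smaller, as an integer, than the position assigned to $n^\omega$. $\mathrm{FO}[<,+,\{P_a\}_{a\in\Sigma}]$ is first-order logic over finite words $w\in\Sigma^*$ whose variables range over positions of $w$, with the natural order $<$, the ternary addition relation $x+y=z$ on positions, and unary predicates $P_a$ (''position carries letter $a$''). *)

From mathcomp Require Import all_boot.
Set Implicit Arguments. Unset Strict Implicit. Unset Printing Implicit Defensive.

Record datagraph (Sigma : finType) (Did Dprop : Type) := DataGraph {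
  dg_V : finType;
  dg_E : dg_V -> Sigma -> dg_V -> bool;
  dg_id : dg_V -> Did;
  dg_id_inj : injective dg_id;
  dg_data : dg_V -> Dprop;
  dg_nonempty : 0 < #|dg_V|
}.

Section Graphs.
Variables (Sigma : finType) (Did Dprop : Type).
Variable G : datagraph Sigma Did Dprop.
Local Notation V := (dg_V G).
Local Notation E := (@dg_E _ _ _ G).

(* A path v0 a1 v1 ... an vn is represented by (v0, [:: (a1,v1); ...; (an,vn)]). *)
Definition gpath := (V * seq (Sigma * V))%type.

Fixpoint valid_steps (u : V) (s : seq (Sigma * V)) : bool :=
  match s with
  | [::] => true
  | (a, v) :: s' => E u a v && valid_steps v s'
  end.

Definition is_path (rho : gpath) : bool := valid_steps rho.1 rho.2.

Definition path_len (rho : gpath) : nat := size rho.2.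
Definition path_label (rho : gpath) : seq Sigma := map fst rho.2.
Definition path_last (rho : gpath) : V := last rho.1 (map snd rho.2).

Definition node_at (rho : gpath) (i : nat) : option V :=
  onth (rho.1 :: map snd rho.2) i.
(* label a_m of the m-th edge (m in 1..n): onth label (m-1) *)

Definition und_adj : rel V := fun x y => [exists a, E x a y || E y a x].
Definition connected_graph : Prop := forall u v : V, connect und_adj u v.

(* at most one predecessor / successor (counted as incoming / outgoing edges,
   so that the label of the path from the first to the last node is unique) *)
Definition at_most_one_pred : Prop :=
  forall v u1 u2 a1 a2, E u1 a1 v -> E u2 a2 v -> u1 = u2 /\ a1 = a2.
Definition at_most_one_succ : Prop :=
  forall u v1 v2 a1 a2, E u a1 v1 -> E u a2 v2 -> v1 = v2 /\ a1 = a2.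

Definition chain_graph : Prop :=
  [/\ connected_graph, at_most_one_pred & at_most_one_succ].

Definition const_data : Prop := forall u v : V, @dg_data _ _ _ G u = @dg_data _ _ _ G v.

Definition first_node (v : V) : Prop := forall u a, ~~ E u a v.
Definition last_node (v : V) : Prop := forall u a, ~~ E v a u.

Definition first_to_last_path (rho : gpath) : Prop :=
  [/\ is_path rho, first_node rho.1 & last_node (path_last rho)].

Definition count_label_edges (a : Sigma) : nat :=
  #|[pred e : V * V | E e.1 a e.2]|.

End Graphs.

(* Path variables are natural numbers; a position variable l^p is the pair
   (name l, sort p). *)
Inductive mwl (Sigma : Type) : Type :=
| MEdge   of Sigma & nat & nat & nat        (* MEdge a p l m  :  E_a(l^p, m^p) *)
| MLt     of nat & nat & nat & nat          (* MLt l p n q    :  l^p < n^q (any sorts) *)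
| MEqId   of nat & nat & nat & nat          (* MEqId l p n q  :  l^p ==_id n^q *)
| MEqData of nat & nat & nat & nat          (* MEqData l p n q : l^p ==_data n^q *)
| MNot    of mwl Sigma
| MOr     of mwl Sigma & mwl Sigma
| MExPos  of nat & nat & mwl Sigma          (* MExPos l p f : exists l^p, f *)
| MExPath of nat & mwl Sigma.               (* MExPath p f  : exists p, f *)

Arguments MEdge {Sigma}. Arguments MLt {Sigma}. Arguments MEqId {Sigma}.
Arguments MEqData {Sigma}. Arguments MNot {Sigma}. Arguments MOr {Sigma}.
Arguments MExPos {Sigma}. Arguments MExPath {Sigma}.

Fixpoint mwl_closed_rec (Sigma : Type) (bp : seq nat) (bpos : seq (nat * nat))
    (f : mwl Sigma) : bool :=
  let okv l p := ((l, p) \in bpos) && (p \in bp) in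
  match f with
  | MEdge _ p l m => okv l p && okv m p
  | MLt l p n q => okv l p && okv n q
  | MEqId l p n q => okv l p && okv n q
  | MEqData l p n q => okv l p && okv n q
  | MNot g => mwl_closed_rec bp bpos g
  | MOr g h => mwl_closed_rec bp bpos g && mwl_closed_rec bp bpos h
  | MExPos l p g => (p \in bp) && mwl_closed_rec bp ((l, p) :: bpos) g
  | MExPath p g => mwl_closed_rec (p :: bp) bpos g
  end.

Definition mwl_sentence (Sigma : Type) (f : mwl Sigma) : bool :=
  mwl_closed_rec [::] [::] f.

Section MWLsem.
Variables (Sigma : finType) (Did Dprop : Type).
Variable G : datagraph Sigma Did Dprop.

Definition upd_pos (mu : nat -> nat -> nat) (l p i : nat) : nat -> nat -> nat :=
  fun l' p' => if (l' == l) && (p' == p) then i else mu l' p'.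
Definition upd_path (nu : nat -> gpath G) (p : nat) (rho : gpath G) : nat -> gpath G :=
  fun p' => if p' == p then rho else nu p'.

(* nu : path assignment; mu l p : position (an integer) assigned to l^p.
   Atoms that need the node/label at a position are false if that position
   lies outside the current path of its sort. *)
Fixpoint mwl_sat (nu : nat -> gpath G) (mu : nat -> nat -> nat) (f : mwl Sigma)
    : Prop :=
  match f with
  | MEdge a p l m =>
      mu m p = (mu l p).+1 /\ onth (path_label (nu p)) (mu l p) = Some a
  | MLt l p n q => mu l p < mu n q
  | MEqId l p n q => exists u v, node_at (nu p) (mu l p) = Some u /\
                                 node_at (nu q) (mu n q) = Some v /\ u = v
  | MEqData l p n q => exists u v, node_at (nu p) (mu l p) = Some u /\
                          node_at (nu q) (mu n q) = Some v /\
                          @dg_data _ _ _ G u = @dg_data _ _ _ G v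
  | MNot g => ~ mwl_sat nu mu g
  | MOr g h => mwl_sat nu mu g \/ mwl_sat nu mu h
  | MExPos l p g => exists i, i <= path_len (nu p) /\ mwl_sat nu (upd_pos mu l p i) g
  | MExPath p g => exists rho, is_path rho /\ mwl_sat (upd_path nu p rho) mu g
  end.

Definition mwl_models (f : mwl Sigma) : Prop :=
  forall nu mu, mwl_sat nu mu f.
End MWLsem.

(* Positions of w are 0, ..., size w - 1. *)
Inductive fo (Sigma : Type) : Type :=
| FLt  of nat & nat
| FAdd of nat & nat & nat
| FP   of Sigma & nat
| FEq  of nat & nat
| FNot of fo Sigma
| FOr  of fo Sigma & fo Sigma
| FEx  of nat & fo Sigma.

Arguments FLt {Sigma}. Arguments FAdd {Sigma}. Arguments FP {Sigma}.
Arguments FEq {Sigma}. Arguments FNot {Sigma}. Arguments FOr {Sigma}.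
Arguments FEx {Sigma}.

Fixpoint fo_closed_rec (Sigma : Type) (bv : seq nat) (f : fo Sigma) : bool :=
  match f with
  | FLt x y => (x \in bv) && (y \in bv)
  | FAdd x y z => [&& x \in bv, y \in bv & z \in bv]
  | FP _ x => x \in bv
  | FEq x y => (x \in bv) && (y \in bv)
  | FNot g => fo_closed_rec bv g
  | FOr g h => fo_closed_rec bv g && fo_closed_rec bv h
  | FEx x g => fo_closed_rec (x :: bv) g
  end.

Definition fo_sentence (Sigma : Type) (f : fo Sigma) : bool := fo_closed_rec [::] f.

Fixpoint fo_sat (Sigma : Type) (w : seq Sigma) (s : nat -> nat) (f : fo Sigma)
    : Prop :=
  match f with
  | FLt x y => s x < s y
  | FAdd x y z => s x + s y = s z
  | FP a x => onth w (s x) = Some a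
  | FEq x y => s x = s y
  | FNot g => ~ fo_sat w s g
  | FOr g h => fo_sat w s g \/ fo_sat w s h
  | FEx x g => exists i, i < size w /\
                 fo_sat w (fun y => if y == x then i else s y) g
  end.

Definition fo_models (Sigma : Type) (w : seq Sigma) (f : fo Sigma) : Prop :=
  forall s, fo_sat w s f.

(* Every path of a chain graph is a segment of the path [rho] from its first
   to its last node, so a path variable can be replaced by two numbers (start
   and length of the segment) and a position variable by one.  Node identity
   becomes equality of absolute positions, data equality is trivial, and edge
   labels are read off the word [w] of [rho].  This yields a first-order formula
   with addition over the positions [0, ..., |w|] of [w]; the extra position
   [|w|] is eliminated by tracking syntactically which variables are assigned
   it.

   For the parity query (over arbitrary data graphs), the graph made of
   [k + 1] disjoint [a]-edges has only paths of length at most 1.  A sentence quantifying at most [d] paths at a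
   time cannot tell [d + 1] such edges from [d + 2]: a path chosen in one graph
   is answered by a path of the same shape on the corresponding edge, or on a
   fresh edge, which always exists.  The two graphs have [a]-edge counts of
   different parity. *)

From HB Require Import structures.
From mathcomp Require Import all_boot zify.
From Stdlib Require Import Classical.
Set Implicit Arguments. Unset Strict Implicit. Unset Printing Implicit Defensive.

(** * First-order logic over the positions of a word and its end *)

(* Like [fo], but variables range over [0, ..., size w]; the extra position
   [size w] carries no letter. *)
Inductive efo (X Sigma : Type) : Type :=
| ELt of X & X
| EAdd of X & X & X
| EP of Sigma & X
| ENot of efo X Sigma
| EOr of efo X Sigma & efo X Sigma
| EAnd of efo X Sigma & efo X Sigma
| EEx of X & efo X Sigma.
Arguments ELt {X Sigma}. Arguments EAdd {X Sigma}. Arguments EP {X Sigma}.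
Arguments ENot {X Sigma}. Arguments EOr {X Sigma}. Arguments EAnd {X Sigma}.
Arguments EEx {X Sigma}.

Definition updv (X : eqType) (T : Type) (s : X -> T) (x : X) (v : T) : X -> T :=
  fun y => if y == x then v else s y.

Fixpoint efo_sat (X : eqType) (Sigma : Type) (w : seq Sigma) (s : X -> nat)
    (f : efo X Sigma) : Prop :=
  match f with
  | ELt x y => s x < s y
  | EAdd x y z => s x + s y = s z
  | EP a x => onth w (s x) = Some a
  | ENot g => ~ efo_sat w s g
  | EOr g h => efo_sat w s g \/ efo_sat w s h
  | EAnd g h => efo_sat w s g /\ efo_sat w s h
  | EEx x g => exists i, i <= size w /\ efo_sat w (updv s x i) g
  end.

Lemma not_or_notP (A B : Prop) : ~ (~ A \/ ~ B) <-> A /\ B.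
Proof. by split=> [/not_or_and [/NNPP ? /NNPP ?] | [? ?] [] []]. Qed.

Section FOAbbreviations.
Variable Sigma : Type.
Implicit Types (w : seq Sigma) (s : nat -> nat) (f g : fo Sigma).

Definition fo_and f g : fo Sigma := FNot (FOr (FNot f) (FNot g)).
Definition fo_false : fo Sigma := FEx 0 (FLt 0 0).
Definition fo_true : fo Sigma := FNot fo_false.
Definition fo_is_zero (u : nat) : fo Sigma := FNot (FEx 0 (FLt 0 u)).
Definition fo_empty_word : fo Sigma := FNot (FEx 0 (FEq 0 0)).
(* [u + v = size w]: the predecessor of [u] plus [v] is the last position. *)
Definition fo_add_size (u v : nat) : fo Sigma :=
  FEx 0 (FEx 1 (fo_and (fo_and (FLt 0 u) (FNot (FEx 2 (fo_and (FLt 0 2) (FLt 2 u)))))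
                       (fo_and (FNot (FEx 2 (FLt 1 2))) (FAdd 0 v 1)))).

Lemma fo_falseF w s : ~ fo_sat w s fo_false.
Proof. by case=> i [_ /=]; rewrite ltnn. Qed.

Lemma fo_trueT w s : fo_sat w s fo_true.
Proof. exact: fo_falseF. Qed.

Lemma fo_is_zeroP w s u : 2 < u -> s u < size w ->
  fo_sat w s (fo_is_zero u) <-> s u = 0.
Proof.
case: u => [|[|[|u]]] // _ Hu /=; split=> [|-> [i [_]] //].
by case: (s _) => // m; case; exists 0; split; [lia|].
Qed.

Lemma fo_empty_wordP w s : fo_sat w s fo_empty_word <-> size w = 0.
Proof.
case: w => [|x w] /=; split=> //; first by move=> _ [i []].
by case; exists 0.
Qed.

Lemma fo_add_sizeP w s u v : 2 < u -> 2 < v -> s u < size w -> s v < size w ->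
  fo_sat w s (fo_add_size u v) <-> s u + s v = size w.
Proof.
case: u v => [|[|[|u]]] // [|[|[|v]]] // _ _ Hu Hv /=.
split=> [[i [Hi [j [Hj]]]] /not_or_notP [/not_or_notP [Hiu Hpred] /not_or_notP [Hlast Hsum]] | Hsum].
- have Ei : s u.+3 = i.+1.
    case: (ltnP i.+1 (s u.+3)) => [Hlt|]; last by lia.
    by case: Hpred; exists i.+1; split; [lia | apply/not_or_notP].
  have Ej : j = (size w).-1.
    case: (ltnP j (size w).-1) => [Hlt|]; last by lia.
    by case: Hlast; exists j.+1; split; lia.
  lia.
- exists (s u.+3).-1; split; first by lia.
  exists (size w).-1; split; first by lia.
  apply/not_or_notP; split; apply/not_or_notP; split; try lia.
  + by case=> z [_ /not_or_notP]; lia.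
  + by case=> z; lia.
Qed.
End FOAbbreviations.
Arguments fo_false {Sigma}. Arguments fo_true {Sigma}. Arguments fo_empty_word {Sigma}.
Arguments fo_is_zero {Sigma}. Arguments fo_add_size {Sigma}.

Section EfoToFo.
Variables (X : countType) (Sigma : Type).
Implicit Types (w : seq Sigma) (f : efo X Sigma) (atEnd : X -> bool).

(* FO variables 0, 1, 2 are reserved for the auxiliary formulas above. *)
Local Notation fv x := (pickle x).+3.

Fixpoint efo_to_fo atEnd f : fo Sigma :=
  match f with
  | ELt x y =>
      if atEnd x then fo_false else if atEnd y then fo_true else FLt (fv x) (fv y)
  | EAdd x y z =>
      match atEnd x, atEnd y, atEnd z with
      | false, false, false => FAdd (fv x) (fv y) (fv z)
      | false, false, true => fo_add_size (fv x) (fv y)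
      | false, true, true => fo_is_zero (fv x)
      | true, false, true => fo_is_zero (fv y)
      | true, true, true => fo_empty_word
      | _, _, _ => fo_false
      end
  | EP a x => if atEnd x then fo_false else FP a (fv x)
  | ENot g => FNot (efo_to_fo atEnd g)
  | EOr g h => FOr (efo_to_fo atEnd g) (efo_to_fo atEnd h)
  | EAnd g h => fo_and (efo_to_fo atEnd g) (efo_to_fo atEnd h)
  | EEx x g => FOr (FEx (fv x) (efo_to_fo (updv atEnd x false) g))
                   (efo_to_fo (updv atEnd x true) g)
  end.

(* [atEnd] marks the variables assigned the extra position [size w]; the
   others are positions of [w], held by the FO variables [fv x]. *)
Definition end_split w atEnd (se : X -> nat) (s : nat -> nat) : Prop :=
  forall x, if atEnd x then se x = size w else se x = s (fv x) /\ se x < size w.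

Lemma end_split_upd_inner w atEnd se s x i : end_split w atEnd se s -> i < size w ->
  end_split w (updv atEnd x false) (updv se x i) (updv s (fv x) i).
Proof.
move=> R Hi y; rewrite /updv !eqSS (inj_eq (pcan_inj pickleK)).
by case: eqP => [_ | _]; [split | exact: R].
Qed.

Lemma end_split_upd_end w atEnd se s x :
  end_split w atEnd se s -> end_split w (updv atEnd x true) (updv se x (size w)) s.
Proof. by move=> R y; rewrite /updv; case: eqP => // _; exact: R. Qed.

Lemma efo_to_foP w f atEnd se s : end_split w atEnd se s ->
  efo_sat w se f <-> fo_sat w s (efo_to_fo atEnd f).
Proof.
elim: f atEnd se s => [x y|x y z|a x|g IH|g IHg h IHh|g IHg h IHh|x g IH]
  atEnd se s R /=.
- move: (R x) (R y); case: (atEnd x) (atEnd y) => [] [] Rx Ry.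
  + by split=> [|/fo_falseF] //; lia.
  + by split=> [|/fo_falseF] //; lia.
  + by split=> _; [exact: fo_trueT | lia].
  + by rewrite /=; lia.
- move: (R x) (R y) (R z).
  case: (atEnd x) (atEnd y) (atEnd z) => [] [] [] Rx Ry Rz;
    rewrite ?fo_empty_wordP ?fo_is_zeroP ?fo_add_sizeP //=; try lia;
    by split=> [|/fo_falseF] //; lia.
- move: (R x); case: (atEnd x) => [-> | [-> _]] //.
  by rewrite onth_default //; split=> [|/fo_falseF].
- by rewrite (IH _ _ _ R).
- by rewrite (IHg _ _ _ R) (IHh _ _ _ R).
- by rewrite (IHg _ _ _ R) (IHh _ _ _ R) not_or_notP.
- split=> [[i [Hi Hg]] | [[i [Hi Hg]] | Hg]].
  + case: (ltnP i (size w)) => Hiw.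
    * by left; exists i; split=> //; apply/(IH _ _ _ (end_split_upd_inner x R Hiw)).
    * have Ei : i = size w by lia.
      by right; apply/(IH _ _ _ (end_split_upd_end x R)); rewrite -Ei.
  + by exists i; split; [lia | apply/(IH _ _ _ (end_split_upd_inner x R Hi))].
  + by exists (size w); split=> //; apply/(IH _ _ _ (end_split_upd_end x R)).
Qed.

Lemma efo_to_fo_closed f atEnd bv :
  (forall x, ~~ atEnd x -> fv x \in bv) -> fo_closed_rec bv (efo_to_fo atEnd f).
Proof.
elim: f atEnd bv => [x y|x y z|a x|g IH|g IHg h IHh|g IHg h IHh|x g IH] atEnd bv H /=.
- by case: (boolP (atEnd x)) => Hx; case: (boolP (atEnd y)) => Hy //=; rewrite !H.
- case: (boolP (atEnd x)) => Hx; case: (boolP (atEnd y)) => Hy;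
    case: (boolP (atEnd z)) => Hz //=; by rewrite ?inE ?H ?orbT.
- by case: (boolP (atEnd x)) => Hx //=; rewrite H.
- exact: IH.
- by rewrite IHg ?IHh.
- by rewrite IHg ?IHh.
- rewrite !IH // => y; rewrite /updv; case: eqP => [-> | _] //; rewrite ?inE ?eqxx //.
  + exact: H.
  + by move/H ->; rewrite orbT.
Qed.

Lemma efo_to_fo_sentence f : fo_sentence (efo_to_fo (fun _ => true) f).
Proof. exact: efo_to_fo_closed. Qed.

Lemma fo_models_efo_to_fo w f :
  fo_models w (efo_to_fo (fun _ => true) f) <-> efo_sat w (fun _ => size w) f.
Proof.
have R s : end_split w (fun _ => true) (fun _ => size w) s by [].
split=> [H | H s]; last exact/(efo_to_foP _ (R s)).
exact/(efo_to_foP _ (R (fun _ => 0)))/H.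
Qed.
End EfoToFo.

(** * Paths of a chain graph are segments of its maximal path *)

Lemma onth_nth_if (T : Type) (x0 : T) (t : seq T) i :
  onth t i = if i < size t then Some (nth x0 t i) else None.
Proof. by elim: t i => [|y t IH] []. Qed.

Lemma onth_lt_size (T : Type) (t : seq T) i : i < size t -> exists e, onth t i = Some e.
Proof. by rewrite -onthTE; case: onth => // e _; exists e. Qed.

Lemma onth_take_drop (T : Type) (t : seq T) s k i a : s + k <= size t ->
  onth (take k (drop s t)) i = Some a <-> i < k /\ onth t (s + i) = Some a.
Proof.
move=> H; rewrite !(onth_nth_if a) size_takel ?size_drop; last by lia.
case: (ltnP i k) => Hik; last by split=> // -[].
by rewrite nth_take // nth_drop ifT; [split=> [->|[]] | lia].
Qed.

Section Paths.
Variables (Sigma : finType) (Did Dprop : Type) (G : datagraph Sigma Did Dprop).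
Implicit Types (u : dg_V G) (t : seq (Sigma * dg_V G)).

Lemma valid_steps_take u t k : valid_steps u t -> valid_steps u (take k t).
Proof. by elim: t u k => [|[a v] t IH] u [|k] //= /andP [-> /IH ->]. Qed.

Lemma valid_steps_drop u t j :
  valid_steps u t -> valid_steps (nth u (u :: map snd t) j) (drop j t).
Proof.
elim: t u j => [|[a v] t IH] u [|j] //= /andP [_ H].
case: (ltnP j (size t).+1) => Hj; last by rewrite drop_oversize //; lia.
by rewrite (set_nth_default v) ?IH // /= size_map.
Qed.
End Paths.

Section ChainSegments.
Variables (Sigma : finType) (Did Dprop : Type) (G : datagraph Sigma Did Dprop).
Hypothesis chainG : chain_graph G.
Variable rho : gpath G.
Hypothesis rho_first_last : first_to_last_path rho.
Local Notation E := (@dg_E _ _ _ G).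
Local Notation n := (size rho.2).

Definition node (i : nat) : dg_V G := nth rho.1 (rho.1 :: map snd rho.2) i.

Definition seg (s k : nat) : gpath G := (node s, take k (drop s rho.2)).

Lemma node_last : node n = path_last rho.
Proof. by rewrite /node /path_last (last_nth rho.1) size_map. Qed.

Lemma rho_step i e : onth rho.2 i = Some e -> E (node i) e.1 e.2 /\ e.2 = node i.+1.
Proof.
case: e => a v He; have Hi : i < n by rewrite -onthTE He.
have [rho_path _ _] := rho_first_last.
have := valid_steps_drop i rho_path; rewrite (drop_nth (a, v) Hi) (onth_nth _ _ _ _ He).
by case/andP=> Hav _; split=> //; rewrite /node /= (nth_map (a, v)) // (onth_nth _ _ _ _ He).
Qed.

Lemma rho_edge i : i < n -> exists a, E (node i) a (node i.+1).
Proof. by case/onth_lt_size=> e /rho_step [He <-]; exists e.1. Qed.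

Lemma no_edge_from_last u a : ~~ E (node n) a u.
Proof. by case: rho_first_last => _ _; rewrite node_last. Qed.

Lemma no_edge_into_first u a : ~~ E u a (node 0).
Proof. by case: rho_first_last. Qed.

Lemma adj_node i u : i <= n -> und_adj (node i) u -> exists2 j, j <= n & u = node j.
Proof.
case: chainG => _ one_pred one_succ Hi /existsP [a /orP [H | H]].
- have Hin : i < n.
    by rewrite ltn_neqAle Hi andbT; apply: contraTneq H => ->; apply: no_edge_from_last.
  have [e He] := onth_lt_size Hin; have [He1 He2] := rho_step He.
  by exists i.+1 => //; have [-> _] := one_succ _ _ _ _ _ H He1.
- case: i Hi H => [|i] Hi H; first by move: (no_edge_into_first u a); rewrite H.
  have [e He] := onth_lt_size Hi; have [He1 He2] := rho_step He.
  by exists i; [lia | rewrite He2 in He1; have [-> _] := one_pred _ _ _ _ _ H He1].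
Qed.

Lemma node_onto u : exists2 i, i <= n & u = node i.
Proof.
case: chainG => /(_ rho.1 u) /connectP [p Hp ->] _ _.
have : exists2 i, i <= n & rho.1 = node i by exists 0.
elim: p rho.1 Hp => [|y p IH] x //= /andP [Hxy Hp] [i Hi Ex].
by apply: IH => //; apply: adj_node Hi _; rewrite -Ex.
Qed.

Lemma node_inj i j : i <= n -> j <= n -> node i = node j -> i = j.
Proof.
case: chainG => _ one_pred _.
elim: i j => [|i IH] [|j] // Hi Hj Eij.
- have [a Ha] := rho_edge Hj.
  by move: (no_edge_into_first (node j) a); rewrite Eij Ha.
- have [a Ha] := rho_edge Hi.
  by move: (no_edge_into_first (node i) a); rewrite -Eij Ha.
- have [a Ha] := rho_edge Hi; have [b Hb] := rho_edge Hj.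
  rewrite Eij in Ha; have [Eij' _] := one_pred _ _ _ _ _ Ha Hb.
  by rewrite (IH j (ltnW Hi) (ltnW Hj) Eij').
Qed.

Lemma valid_steps_from_node s t : s <= n -> valid_steps (node s) t ->
  s + size t <= n /\ t = take (size t) (drop s rho.2).
Proof.
case: chainG => _ _ one_succ.
elim: t s => [|[a v] t IH] s Hs /=; first by rewrite addn0 take0.
case/andP=> Hav Ht.
have Hsn : s < n.
  by rewrite ltn_neqAle Hs andbT; apply: contraTneq Hav => ->; apply: no_edge_from_last.
have [e He] := onth_lt_size Hsn; have [He1 He2] := rho_step He.
have [Ev Ea] := one_succ _ _ _ _ _ Hav He1.
rewrite Ev He2 in Ht; have [Hsize Et] := IH _ Hsn Ht.
split; first by lia.
by rewrite (drop_nth e Hsn) (onth_nth _ _ _ _ He) /= -Et Ea Ev; case: e {He He1 He2 Ea Ev}.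
Qed.

Lemma path_is_seg pi : is_path pi -> exists s k, s + k <= n /\ pi = seg s k.
Proof.
case: pi => u t; have [s Hs ->] := node_onto u; rewrite /is_path /=.
by case/(valid_steps_from_node Hs) => Hsize Et; exists s, (size t); rewrite /seg -Et.
Qed.

Lemma is_path_seg s k : is_path (seg s k).
Proof.
by case: rho_first_last => rho_path _ _; apply/valid_steps_take/valid_steps_drop.
Qed.

Lemma seg_len s k : s + k <= n -> path_len (seg s k) = k.
Proof. by move=> H; rewrite /path_len /seg /= size_takel // size_drop; lia. Qed.

Lemma node_at_seg s k i : s + k <= n ->
  node_at (seg s k) i = if i <= k then Some (node (s + i)) else None.
Proof.
move=> H; rewrite /node_at /seg /= (onth_nth_if rho.1) /= size_map size_takel ?size_drop;
  last by lia.
rewrite ltnS; case: ifP => // Hik; congr Some.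
case: i Hik => [|i] Hik /=; first by rewrite addn0.
by rewrite map_take map_drop nth_take // nth_drop /node addnS.
Qed.

Lemma seg_label s k : path_label (seg s k) = take k (drop s (path_label rho)).
Proof. by rewrite /path_label /seg /= map_take map_drop. Qed.
End ChainSegments.

(** * Translating MWL into first-order logic over chains *)

(* In a chain every path is a segment of [rho]: the path variable [p] becomes
   the start [TStart p] and the length [TLen p] of its segment, the position
   variable [l^p] becomes [TPos l p], and [TAux] is a scratch variable. *)
Inductive tvar := TStart of nat | TLen of nat | TPos of nat & nat | TAux.

Definition tvar_eqb (x y : tvar) : bool :=
  match x, y with
  | TStart p, TStart q | TLen p, TLen q => p == q
  | TPos l p, TPos m q => (l == m) && (p == q)
  | TAux, TAux => true
  | _, _ => false
  end.

Lemma tvar_eqP : Equality.axiom tvar_eqb.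
Proof.
case=> [p|p|l p|] [q|q|m q|] /=; try by constructor.
- by apply: (iffP eqP) => [->|[]].
- by apply: (iffP eqP) => [->|[]].
- by apply: (iffP andP) => [[/eqP -> /eqP ->]|[-> ->]].
Qed.

HB.instance Definition _ := hasDecEq.Build tvar tvar_eqP.

Lemma tvar_eqE x y : (x == y) = tvar_eqb x y. Proof. by []. Qed.

Definition tvar_code (x : tvar) : seq nat :=
  match x with
  | TStart p => [:: 0; p] | TLen p => [:: 1; p] | TPos l p => [:: 2; l; p] | TAux => [:: 3]
  end.

Definition tvar_decode (s : seq nat) : option tvar :=
  match s with
  | [:: 0; p] => Some (TStart p) | [:: 1; p] => Some (TLen p)
  | [:: 2; l; p] => Some (TPos l p) | [:: 3] => Some TAux | _ => None
  end.

Lemma tvar_codeK : pcancel tvar_code tvar_decode. Proof. by case. Qed.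

HB.instance Definition _ := PCanHasChoice tvar_codeK.
HB.instance Definition _ := PCanIsCountable tvar_codeK.

Section MwlToEfo.
Variable Sigma : Type.
Implicit Types (w : seq Sigma) (se : tvar -> nat).

Definition ele (x y : tvar) : efo tvar Sigma := ENot (ELt y x).

(* Locked so that simplifying [efo_sat] leaves it folded for [esuccP]. *)
Definition esucc (x y : tvar) : efo tvar Sigma :=
  locked (EAnd (ELt x y) (ENot (EEx TAux (EAnd (ELt x TAux) (ELt TAux y))))).

Fixpoint mwl_to_efo (f : mwl Sigma) : efo tvar Sigma :=
  match f with
  | MEdge a p l m =>
      EAnd (esucc (TPos l p) (TPos m p))
        (EAnd (ELt (TPos l p) (TLen p))
              (EEx TAux (EAnd (EAdd (TStart p) (TPos l p) TAux) (EP a TAux))))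
  | MLt l p m q => ELt (TPos l p) (TPos m q)
  | MEqId l p m q =>
      EAnd (ele (TPos l p) (TLen p)) (EAnd (ele (TPos m q) (TLen q))
        (EEx TAux (EAnd (EAdd (TStart p) (TPos l p) TAux) (EAdd (TStart q) (TPos m q) TAux))))
  | MEqData l p m q => EAnd (ele (TPos l p) (TLen p)) (ele (TPos m q) (TLen q))
  | MNot g => ENot (mwl_to_efo g)
  | MOr g h => EOr (mwl_to_efo g) (mwl_to_efo h)
  | MExPos l p g => EEx (TPos l p) (EAnd (ele (TPos l p) (TLen p)) (mwl_to_efo g))
  | MExPath p g =>
      EEx (TStart p) (EEx (TLen p)
        (EAnd (EEx TAux (EAdd (TStart p) (TLen p) TAux)) (mwl_to_efo g)))
  end.

Lemma esuccP w se l p m q : se (TPos m q) <= size w ->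
  efo_sat w se (esucc (TPos l p) (TPos m q)) <-> se (TPos m q) = (se (TPos l p)).+1.
Proof.
move=> Hm; rewrite /esucc -lock /=; split=> [[H1 H2] | E].
- apply/eqP; rewrite eqn_leq H1 andbT leqNgt; apply/negP => H3.
  by apply: H2; exists (se (TPos l p)).+1; rewrite /updv !tvar_eqE /=; lia.
- by split; [lia | case=> i [_]; rewrite /updv !tvar_eqE /=; lia].
Qed.
End MwlToEfo.

Section MwlOnChains.
Variables (Sigma : finType) (Did Dprop : Type) (G : datagraph Sigma Did Dprop).
Hypothesis chainG : chain_graph G.
Hypothesis constG : const_data G.
Variable rho : gpath G.
Hypothesis rho_first_last : first_to_last_path rho.
Local Notation n := (size rho.2).
Local Notation w := (path_label rho).

Lemma size_label : size w = n. Proof. exact: size_map. Qed.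

Definition seg_env (bp : seq nat) (bpos : seq (nat * nat)) (nu : nat -> gpath G)
    (mu : nat -> nat -> nat) (se : tvar -> nat) : Prop :=
  (forall p, p \in bp ->
     se (TStart p) + se (TLen p) <= n /\ nu p = seg rho (se (TStart p)) (se (TLen p))) /\
  (forall l p, (l, p) \in bpos -> mu l p = se (TPos l p) /\ se (TPos l p) <= n).

Lemma seg_env_upd_pos bp bpos nu mu se l p i : seg_env bp bpos nu mu se -> i <= n ->
  seg_env bp ((l, p) :: bpos) nu (upd_pos mu l p i) (updv se (TPos l p) i).
Proof.
move=> [Hpaths Hpos] Hi; split=> [q /Hpaths | l' p'] //.
rewrite inE /upd_pos /updv tvar_eqE /= xpair_eqE; case: andP => // _; exact: Hpos.
Qed.

Lemma seg_env_upd_path bp bpos nu mu se p s k : seg_env bp bpos nu mu se -> s + k <= n ->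
  seg_env (p :: bp) bpos (upd_path nu p (seg rho s k)) mu
    (updv (updv se (TStart p) s) (TLen p) k).
Proof.
move=> [Hpaths Hpos] Hsk; split=> [q | l' p' /Hpos] //.
by rewrite inE /upd_path /updv !tvar_eqE /=; case: eqP => // _; exact: Hpaths.
Qed.

Lemma mwl_to_efo_edgeP a p l m bp bpos nu mu se :
  mwl_closed_rec bp bpos (MEdge a p l m) -> seg_env bp bpos nu mu se ->
  mwl_sat nu mu (MEdge a p l m) <-> efo_sat w se (mwl_to_efo (MEdge a p l m)).
Proof.
rewrite /= size_label => /andP [/andP [Hl Hp] /andP [Hm _]] [Hpaths Hpos].
have [Hsk ->] := Hpaths p Hp; have [-> Hln] := Hpos l p Hl; have [-> Hmn] := Hpos m p Hm.
rewrite seg_label onth_take_drop ?size_label // esuccP ?size_label // /updv !tvar_eqE /=.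
split=> [[-> [Hlk Ha]] | [-> [Hlk [z [_ [<- Ha]]]]]] //.
by split=> //; split=> //; exists (se (TStart p) + se (TPos l p)); split=> //; lia.
Qed.

Lemma mwl_to_efo_eqidP l p m q bp bpos nu mu se :
  mwl_closed_rec bp bpos (@MEqId Sigma l p m q) -> seg_env bp bpos nu mu se ->
  mwl_sat nu mu (@MEqId Sigma l p m q) <-> efo_sat w se (mwl_to_efo (@MEqId Sigma l p m q)).
Proof.
rewrite /= size_label => /and3P [/andP [Hl Hp] Hm Hq] [Hpaths Hpos].
have [Hp1 ->] := Hpaths p Hp; have [-> Hln] := Hpos l p Hl.
have [Hq1 ->] := Hpaths q Hq; have [-> Hmn] := Hpos m q Hm.
rewrite !node_at_seg // /updv !tvar_eqE /=.
split=> [[u [v]] | [Hlk [Hmk [z [_ [Ez1 Ez2]]]]]].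
- case: ifPn => Hlk; last by case.
  case: ifPn => Hmk; last by case=> _ [].
  case=> -[<-] [[<-]] /(node_inj chainG rho_first_last) -> //; [|lia|lia].
  by split; [lia | split; [lia | exists (se (TStart q) + se (TPos m q)); lia]].
- rewrite !ifT; try lia.
  by exists (node rho z), (node rho z); rewrite Ez1 Ez2.
Qed.

Lemma mwl_to_efoP (f : mwl Sigma) bp bpos nu mu se :
  mwl_closed_rec bp bpos f -> seg_env bp bpos nu mu se ->
  mwl_sat nu mu f <-> efo_sat w se (mwl_to_efo f).
Proof.
elim: f bp bpos nu mu se => [a p l m|l p m q|l p m q|l p m q|g IH|g IHg h IHh|l p g IH|p g IH]
  bp bpos nu mu se.
- exact: mwl_to_efo_edgeP.
- by case/and3P=> /andP [Hl _] Hm _ [_ Hpos]; rewrite /= (Hpos l p Hl).1 (Hpos m q Hm).1.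
- exact: mwl_to_efo_eqidP.
- rewrite /= => /and3P [/andP [Hl Hp] Hm Hq] [Hpaths Hpos].
  have [Hp1 ->] := Hpaths p Hp; have [-> _] := Hpos l p Hl.
  have [Hq1 ->] := Hpaths q Hq; have [-> _] := Hpos m q Hm.
  rewrite !node_at_seg //; split=> [[u [v]] | [Hlk Hmk]].
  + case: ifPn => Hlk; last by case.
    by case: ifPn => Hmk; [lia | case=> _ []].
  + rewrite !ifT; try lia.
    by do 2 eexists; split; [| split; [| apply: constG]].
- by move=> Hg R; rewrite /= (IH _ _ _ _ _ Hg R).
- by case/andP=> Hg Hh R; rewrite /= (IHg _ _ _ _ _ Hg R) (IHh _ _ _ _ _ Hh R).
- rewrite /= size_label => /andP [Hp Hg] R; have [Hsk Hnu] := R.1 p Hp.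
  rewrite Hnu seg_len //; split=> [[i [Hi Hgi]] | [i [Hi [Hle Hgi]]]].
  + exists i; split; first by lia.
    split; first by rewrite /updv !tvar_eqE /= !eqxx /=; lia.
    by apply/(IH _ _ _ _ _ Hg (seg_env_upd_pos l p R _)) => //; lia.
  + move: Hle; rewrite /updv !tvar_eqE /= !eqxx /= => Hle; exists i; split; first by lia.
    by apply/(IH _ _ _ _ _ Hg (seg_env_upd_pos l p R _)) => //; lia.
- rewrite /= size_label => Hg R.
  split=> [[pi [Hpi Hgpi]] | [s [Hs [k [Hk [[z [Hz Ez]] Hgsk]]]]]].
  + have [s [k [Hsk Epi]]] := path_is_seg chainG rho_first_last Hpi.
    exists s; split; first by lia.
    exists k; split; first by lia.
    split; first by exists (s + k); rewrite /updv !tvar_eqE /= !eqxx /=.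
    by apply/(IH _ _ _ _ _ Hg (seg_env_upd_path p R Hsk)); rewrite -Epi.
  + move: Ez; rewrite /updv !tvar_eqE /= !eqxx /= => Ez.
    have Hsk : s + k <= n by lia.
    exists (seg rho s k); split; first exact: (is_path_seg rho_first_last).
    exact/(IH _ _ _ _ _ Hg (seg_env_upd_path p R Hsk)).
Qed.
End MwlOnChains.

Definition mwl_to_fo (Sigma : Type) (phi : mwl Sigma) : fo Sigma :=
  efo_to_fo (fun _ => true) (mwl_to_efo phi).

Lemma mwl_to_fo_sentence (Sigma : Type) (phi : mwl Sigma) : fo_sentence (mwl_to_fo phi).
Proof. exact: efo_to_fo_sentence. Qed.

Lemma mwl_to_foP (Sigma : finType) (Did Dprop : Type) (G : datagraph Sigma Did Dprop)
    (rho : gpath G) (phi : mwl Sigma) :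
  chain_graph G -> const_data G -> first_to_last_path rho -> mwl_sentence phi ->
  mwl_models G phi <-> fo_models (path_label rho) (mwl_to_fo phi).
Proof.
move=> chainG constG rho_fl Hphi; rewrite fo_models_efo_to_fo.
have R nu mu : seg_env rho [::] [::] nu mu (fun _ => size (path_label rho)) by [].
split=> [H | H nu mu].
- by apply/(mwl_to_efoP chainG constG rho_fl Hphi (R (fun _ => rho) (fun _ _ => 0))).
- exact/(mwl_to_efoP chainG constG rho_fl Hphi (R _ _)).
Qed.

(** * Parity of the number of a-edges is not MWL-definable *)

Lemma exists_notin (T : finType) (s : seq T) : size s < #|T| -> exists c, c \notin s.
Proof.
move=> Hs; have /subsetPn [c _ Hc] : ~~ (T \subset s); last by exists c.
by apply: contraTN Hs => /subset_leq_card Hle; rewrite -leqNgt (leq_trans Hle) ?card_size.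
Qed.

Section DisjointEdges.
Variables (Sigma : finType) (Did Dprop : Type) (a : Sigma).
Variables (fid : nat -> Did) (fid_inj : injective fid) (d0 : Dprop).

Definition de_edge k (x : 'I_k.+1 * bool) (b : Sigma) (y : 'I_k.+1 * bool) : bool :=
  [&& b == a, x.1 == y.1, ~~ x.2 & y.2].

Lemma de_id_inj k : injective (fun x : 'I_k.+1 * bool => fid (pickle x)).
Proof. by move=> x y /fid_inj /(pcan_inj (@pickleK _)). Qed.

Lemma de_nonempty k : 0 < #|{: 'I_k.+1 * bool}|.
Proof. by rewrite card_prod card_ord card_bool. Qed.

Definition disjoint_edges k : datagraph Sigma Did Dprop :=
  DataGraph (@de_edge k) (@de_id_inj k) (fun _ => d0) (de_nonempty k).

Lemma count_disjoint_edges k : count_label_edges (disjoint_edges k) a = k.+1.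
Proof.
rewrite /count_label_edges -[RHS](card_ord k.+1).
pose e (i : 'I_k.+1) := ((i, false), (i, true)) : ('I_k.+1 * bool) * ('I_k.+1 * bool).
have e_inj : injective e by move=> i j [].
rewrite -(card_image e_inj); apply: eq_card => -[[i b] [j c]]; rewrite inE /= /de_edge eqxx /=.
apply/and3P/imageP => [[/eqP <- Hb Hc] | [i' _ [-> -> -> ->]]] //.
by exists i => //; move: Hb Hc; case: b; case: c.
Qed.
End DisjointEdges.

Fixpoint mwl_path_depth (Sigma : Type) (f : mwl Sigma) : nat :=
  match f with
  | MNot g | MExPos _ _ g => mwl_path_depth g
  | MOr g h => maxn (mwl_path_depth g) (mwl_path_depth h)
  | MExPath _ g => (mwl_path_depth g).+1
  | _ => 0
  end.

Lemma ex_some_eq (T : eqType) (o1 o2 : option T) :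
  (exists u v, o1 = Some u /\ o2 = Some v /\ u = v) <-> isSome o1 && (o1 == o2).
Proof.
split=> [[u [v [-> [-> ->]]]] | ]; first by rewrite eqxx.
by case: o1 => // u /andP [_ /eqP <-]; exists u, u.
Qed.

Lemma ex_some_isSome (T D : Type) (o1 o2 : option T) (d : D) :
  (exists u v, o1 = Some u /\ o2 = Some v /\ d = d) <-> isSome o1 && isSome o2.
Proof.
split=> [[u [v [-> [-> _]]]] // | ].
by case: o1 => // u; case: o2 => // v _; exists u, v.
Qed.

Section DisjointEdgesGame.
Variables (Sigma : finType) (Did Dprop : Type) (a : Sigma).
Variables (fid : nat -> Did) (fid_inj : injective fid) (d0 : Dprop).
Local Notation G k := (disjoint_edges a fid_inj d0 k).

Definition comp k (pi : gpath (G k)) : 'I_k.+1 := pi.1.1.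
Definition shape k (pi : gpath (G k)) : bool * nat := (pi.1.2, size pi.2).

Lemma de_path k (pi : gpath (G k)) : is_path pi -> size pi.2 <= 1 /\
  (size pi.2 = 1 -> pi.2 = [:: (a, (comp pi, true))] /\ pi.1.2 = false).
Proof.
case: pi => [[i b] [|[c [j d]] [|[e y] t]]] //=; rewrite /is_path /= /de_edge /=.
- by rewrite andbT => /and4P [/eqP -> /eqP <- /negPf -> ->].
- by case/andP=> /and4P [_ _ _ ->] /andP [/and4P []].
Qed.

Lemma node_at_de k (pi : gpath (G k)) j : is_path pi ->
  node_at pi j = if j <= size pi.2 then Some (comp pi, if j == 0 then pi.1.2 else true)
                 else None.
Proof.
case: pi => [[i b] t] /de_path /= [Hsize Hone]; rewrite /node_at.
case: j => [|j] //=; case: t Hsize Hone => [|e [|? ?]] //= _ Hone; first by case: j.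
by have [[->] _] := Hone erefl; case: j => [|[]].
Qed.

Lemma label_de k (pi : gpath (G k)) : is_path pi -> path_label pi = nseq (size pi.2) a.
Proof.
case: pi => x t /de_path /= [Hsize Hone].
by case: t Hsize Hone => [|e [|? ?]] //= _ Hone; have [-> _] := Hone erefl.
Qed.

Definition similar k k' (bp : seq nat) (nu : nat -> gpath (G k)) (nu' : nat -> gpath (G k')) :=
  forall p, p \in bp -> [/\ is_path (nu p), is_path (nu' p), shape (nu p) = shape (nu' p) &
    forall q, q \in bp -> (comp (nu p) == comp (nu q)) = (comp (nu' p) == comp (nu' q))].

Lemma similar_sym k k' bp nu nu' : @similar k k' bp nu nu' -> similar bp nu' nu.
Proof. by move=> R p /R [? ? ? Hcomp]; split=> // q /Hcomp ->. Qed.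

(* A path chosen in [G k] is answered in [G k'] by a path of the same shape,
   on the edge of an old path sharing its edge, or else on a fresh edge: at
   most [size bp] edges are in use and [G k'] has [k'.+1]. *)
Lemma similar_extend k k' bp nu nu' p (pi : gpath (G k)) :
  @similar k k' bp nu nu' -> size bp < k'.+1 -> is_path pi ->
  exists pi' : gpath (G k'), is_path pi' /\
    similar (p :: bp) (upd_path nu p pi) (upd_path nu' p pi').
Proof.
move=> R Hbp Hpi.
have [c' Hc'] : exists c' : 'I_k'.+1, forall q, q \in bp ->
    (comp pi == comp (nu q)) = (c' == comp (nu' q)).
  case: (boolP (has (fun q => comp (nu q) == comp pi) bp)).
    by case/hasP=> q Hq /eqP <-; exists (comp (nu' q)) => r Hr; have [_ _ _ ->] := R q Hq.
  move/hasPn=> Hn.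
  have [c Hc] : exists c, c \notin [seq comp (nu' q) | q <- bp].
    by apply: exists_notin; rewrite size_map card_ord.
  exists c => q Hq; rewrite eq_sym (negPf (Hn q Hq)); apply/esym/negP => /eqP Ec.
  by move: Hc; rewrite Ec (map_f (fun r => comp (nu' r)) Hq).
have [Hsize Hone] := de_path Hpi.
pose pi' : gpath (G k') :=
  ((c', pi.1.2), if size pi.2 == 1 then [:: (a, (c', true))] else [::]).
have Hpi' : is_path pi'.
  by rewrite /pi' /is_path /=; case: eqP => // /Hone [_ ->]; rewrite /= /de_edge /= !eqxx.
have Hshape : shape pi = shape pi'.
  by rewrite /shape /pi' /=; case: eqP => // Hne; congr pair; case: (pi.2) Hsize Hne => [|? []].
exists pi'; split=> // q; rewrite inE /upd_path.
case: eqP => [_ _ | _ /= Hq].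
  by split=> // r; rewrite inE; case: eqP => [_ | _ /Hc'] //; rewrite !eqxx.
have [Pq Pq' Sq Cq] := R q Hq; split=> // r; rewrite inE.
by case: eqP => [_ _ | _ /Cq //]; rewrite eq_sym (Hc' q Hq) eq_sym.
Qed.

Lemma mwl_sat_similar k k' (f : mwl Sigma) bp bpos nu nu' mu :
  mwl_closed_rec bp bpos f ->
  size bp + mwl_path_depth f <= k.+1 -> size bp + mwl_path_depth f <= k'.+1 ->
  @similar k k' bp nu nu' -> mwl_sat nu mu f <-> mwl_sat nu' mu f.
Proof.
elim: f bp bpos nu nu' mu => [b p l m|l p m q|l p m q|l p m q|g IH|g IHg h IHh|l p g IH|p g IH]
  bp bpos nu nu' mu /=.
- case/andP=> /andP [_ Hp] _ _ _ /(_ p Hp) [Pp Pp' [_ Sp] _].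
  by rewrite !label_de // Sp.
- by [].
- case/and3P=> /andP [_ Hp] _ Hq _ _ R.
  have [Pp Pp' [Bp Sp] Cp] := R p Hp; have [Pq Pq' [Bq Sq] _] := R q Hq.
  rewrite !node_at_de // !ex_some_eq Sp Sq Bp Bq.
  by repeat case: ifP => _ //=; rewrite !(inj_eq Some_inj) !xpair_eqE (Cp q Hq).
- case/and3P=> /andP [_ Hp] _ Hq _ _ R.
  have [Pp Pp' [_ Sp] _] := R p Hp; have [Pq Pq' [_ Sq] _] := R q Hq.
  rewrite !node_at_de // Sp Sq.
  by rewrite !ex_some_isSome; case: (mu l p <= _); case: (mu m q <= _).
- by move=> Hg H1 H2 R; rewrite (IH _ _ _ _ mu Hg H1 H2 R).
- case/andP=> Hg Hh H1 H2 R.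
  by rewrite (IHg _ _ _ _ mu Hg _ _ R) ?(IHh _ _ _ _ mu Hh _ _ R) //; lia.
- case/andP=> Hp Hg H1 H2 R; have [_ _ [_ Sp] _] := R p Hp.
  rewrite /path_len Sp; split=> -[i [Hi H]]; exists i.
  + by rewrite -(IH _ _ _ _ _ Hg H1 H2 R).
  + by rewrite (IH _ _ _ _ _ Hg H1 H2 R).
- move=> Hg H1 H2 R.
  have H1' : size (p :: bp) + mwl_path_depth g <= k.+1 by rewrite /=; lia.
  have H2' : size (p :: bp) + mwl_path_depth g <= k'.+1 by rewrite /=; lia.
  have Hbp : size bp < k.+1 by rewrite /= in H1'; lia.
  have Hbp' : size bp < k'.+1 by rewrite /= in H2'; lia.
  split=> -[pi [Hpi H]].
  + have [pi' [Hpi' R']] := similar_extend p R Hbp' Hpi.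
    by exists pi'; rewrite -(IH _ _ _ _ mu Hg H1' H2' R').
  + have [pi0 [Hpi0 R']] := similar_extend p (similar_sym R) Hbp Hpi.
    by exists pi0; rewrite (IH _ _ _ _ mu Hg H1' H2' (similar_sym R')).
Qed.

Lemma mwl_models_disjoint_edges (phi : mwl Sigma) k k' :
  mwl_sentence phi -> mwl_path_depth phi <= k.+1 -> mwl_path_depth phi <= k'.+1 ->
  mwl_models (G k) phi -> mwl_models (G k') phi.
Proof.
move=> Hphi Hk Hk' H nu' mu.
pose nu (_ : nat) : gpath (G k) := ((ord0, false), [::]).
by apply/(mwl_sat_similar (bp := [::]) (nu := nu) mu Hphi Hk Hk') => //; exact: H.
Qed.
End DisjointEdgesGame.

Lemma even_count_not_mwl (Sigma : finType) (Did Dprop : Type) (a : Sigma) :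
  (exists f : nat -> Did, injective f) -> Dprop ->
  ~ exists phi : mwl Sigma, mwl_sentence phi /\
      forall G : datagraph Sigma Did Dprop,
        mwl_models G phi <-> ~~ odd (count_label_edges G a).
Proof.
move=> [fid fid_inj] d0 [phi [Hphi Heven]].
pose d := mwl_path_depth phi.
have H1 := Heven (disjoint_edges a fid_inj d0 d).
have H2 := Heven (disjoint_edges a fid_inj d0 d.+1).
rewrite !count_disjoint_edges in H1 H2.
have M12 : mwl_models (disjoint_edges a fid_inj d0 d) phi ->
            mwl_models (disjoint_edges a fid_inj d0 d.+1) phi.
  by apply: mwl_models_disjoint_edges => //; rewrite /d; lia.
have M21 : mwl_models (disjoint_edges a fid_inj d0 d.+1) phi ->
            mwl_models (disjoint_edges a fid_inj d0 d) phi.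
  by apply: mwl_models_disjoint_edges => //; rewrite /d; lia.
move: H1 H2; rewrite /= negbK; case: (odd d) => -[A B] [C D].
- by have := C (M12 (B isT)).
- by have := A (M21 (D isT)).
Qed.

Theorem mainTheorem17 (Sigma : finType) (Did Dprop : Type)
  (Did_infinite : exists f : nat -> Did, injective f)
  (Dprop_infinite : exists f : nat -> Dprop, injective f) :
  (forall phi : mwl Sigma, mwl_sentence phi ->
     exists psi : fo Sigma, fo_sentence psi /\
       forall G : datagraph Sigma Did Dprop,
         chain_graph G -> const_data G ->
         forall rho : gpath G, first_to_last_path rho ->
           (mwl_models G phi <-> fo_models (path_label rho) psi))
  /\
  (forall a : Sigma,
     ~ exists phi : mwl Sigma, mwl_sentence phi /\
         forall G : datagraph Sigma Did Dprop,
           (mwl_models G phi <-> ~~ odd (count_label_edges G a))).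
Proof.
split=> [phi Hphi | a].
- exists (mwl_to_fo phi); split; first exact: mwl_to_fo_sentence.
  by move=> G chainG constG rho rho_fl; apply: mwl_to_foP.
- by case: Dprop_infinite => fd _; apply: even_count_not_mwl Did_infinite (fd 0).
Qed.
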